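(* Let $P\in N_1$ be a sum of $9$ monomials, not necessarily distinct (i.e. $P(1)=9$). Then $P$ has unique factorisation inside $N_1$: any two factorisations of $P$ into irreducible elements of $N_1$ coincide up to the order of the factors.
   Context: $N_1=\mathbb{Z}_{\ge0}[X]$ is the semiring of univariate polynomials with nonnegative integer coefficients. An element $Q\neq0,1$ of $N_1$ is irreducible if in every factorisation $Q=ST$ with $S,T\in N_1$ one of $S,T$ is $1$. *)

From mathcomp Require Import all_boot all_algebra.
Set Implicit Arguments. Unset Strict Implicit. Unset Printing Implicit Defensive.
Import GRing.Theory.
Local Open Scope ring_scope.

Notation N1 := {poly nat}.

Definition irreducibleN1 (Q : N1) : Prop :=
  Q <> 0 /\ Q <> 1 /\ forall S T : N1, Q = S * T -> S = 1 \/ T = 1.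

Definition irr_factorisation (P : N1) (s : seq N1) : Prop :=
  (forall q, q \in s -> irreducibleN1 q) /\ \prod_(q <- s) q = P.

From mathcomp Require Import all_boot all_algebra zify.
Import GRing.Theory.

(* Every irreducible of N_1 other than X has a nonzero constant term and value
   at least 2 at 1.  Hence, once the power of X is split off (its exponent is
   the order of vanishing of P at 0), a factorisation of P consists either of
   one irreducible of value 9 or of two factors of value 3, and the two shapes
   cannot both occur.  A factor of value 3 with nonzero constant term is a
   trinomial 1 + X^a + X^a', and the multiset {x + y | x in {0,a,a'}, y in
   {0,b,b'}} of exponents of (1 + X^a + X^a')(1 + X^b + X^b') determines the
   pair of trinomials: its order statistics give min(a,b), a' + b' and
   max(a' + b, a + b'), and with its sum and sum of squares they pin down
   {(a,a'), (b,b')}. *)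

Lemma muln_eq9 x y m :
  2 <= x -> 2 <= y -> x * y * m = 9 -> [/\ x = 3, y = 3 & m = 1].
Proof.
move=> x2 y2 xym9; have m_gt0 : 0 < m by case: m xym9 => //; rewrite muln0.
have ym2 : 2 <= y * m by nia.
have : x <= 4 by nia.
rewrite -mulnA in xym9 *.
case: x x2 xym9 => [|[|[|[|[|]]]]] //= _ xym9 _; [split; lia| |split; lia].
have : y <= 3 by nia.
case: y y2 {ym2} xym9 => [|[|[|[|]]]] //= _ xym9 _; split; lia.
Qed.

Lemma prod_ge2_eq9 (l : seq nat) :
  all (leq 2) l -> \prod_(n <- l) n = 9 -> size l = 1 \/ l = [:: 3; 3].
Proof.
case: l => [|x [|y l]] /=; rewrite ?big_nil ?big_seq1 //; first by left.
move=> /and3P[x2 y2 l2]; rewrite !big_cons mulnA.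
move=> /(muln_eq9 _ _ _ x2 y2)[-> -> l1].
right; case: l l2 l1 => [|z l] //= /andP[z2 _].
by rewrite big_cons => /eqP; rewrite muln_eq1 => /andP[/eqP z1]; rewrite z1 in z2.
Qed.

Definition trinomial_sums (a a' b b' : nat) : seq nat :=
  [seq x + y | x <- [:: 0; a; a'], y <- [:: 0; b; b']].

Section TrinomialSums.

Context {a a' b b' : nat}.
Hypotheses (le_a : a <= a') (le_b : b <= b').

Lemma trinomial_sums_second_least k :
  (2 <= count (leq^~ k) (trinomial_sums a a' b b')) = (minn a b <= k).
Proof. rewrite /trinomial_sums /=; lia. Qed.

Lemma trinomial_sums_greatest k :
  (1 <= count (leq k) (trinomial_sums a a' b b')) = (k <= a' + b').
Proof. rewrite /trinomial_sums /=; lia. Qed.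

Lemma trinomial_sums_second_greatest k :
  (2 <= count (leq k) (trinomial_sums a a' b b')) = (k <= maxn (a' + b) (a + b')).
Proof. rewrite /trinomial_sums /=; lia. Qed.

End TrinomialSums.

Lemma trinomial_sums_order_stats {a a' b b' c c' d d' : nat} :
  a <= a' -> b <= b' -> c <= c' -> d <= d' ->
  perm_eq (trinomial_sums a a' b b') (trinomial_sums c c' d d') ->
  [/\ minn a b = minn c d, a' + b' = c' + d'
    & maxn (a' + b) (a + b') = maxn (c' + d) (c + d')].
Proof.
move=> le_a le_b le_c le_d /permP count_eq.
have E1 k : (minn a b <= k) = (minn c d <= k).
  rewrite -(trinomial_sums_second_least le_a le_b).
  by rewrite -(trinomial_sums_second_least le_c le_d) count_eq.
have E2 k : (k <= a' + b') = (k <= c' + d').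
  rewrite -(trinomial_sums_greatest le_a le_b).
  by rewrite -(trinomial_sums_greatest le_c le_d) count_eq.
have E3 k : (k <= maxn (a' + b) (a + b')) = (k <= maxn (c' + d) (c + d')).
  rewrite -(trinomial_sums_second_greatest le_a le_b).
  by rewrite -(trinomial_sums_second_greatest le_c le_d) count_eq.
split; apply/eqP; rewrite eqn_leq.
- by rewrite E1 leqnn -E1 leqnn.
- by rewrite -E2 leqnn E2 leqnn.
- by rewrite -E3 leqnn E3 leqnn.
Qed.

Lemma eq_trinomial_params a a' b b' c c' d d' :
  a <= a' -> b <= b' -> c <= c' -> d <= d' ->
  minn a b = minn c d -> a' + b' = c' + d' ->
  maxn (a' + b) (a + b') = maxn (c' + d) (c + d') ->
  a + a' + b + b' = c + c' + d + d' ->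
  3 * (a * a + a' * a' + b * b + b' * b') + 2 * ((a + a') * (b + b')) =
  3 * (c * c + c' * c' + d * d + d' * d') + 2 * ((c + c') * (d + d')) ->
  (a = c /\ a' = c' /\ b = d /\ b' = d') \/ (a = d /\ a' = d' /\ b = c /\ b' = c').
Proof.
move=> le_a le_b le_c le_d em et es sm sq.
have [u eu] : exists u, a' = a + u by exists (a' - a); lia.
have [v ev] : exists v, b' = b + v by exists (b' - b); lia.
have [u' eu'] : exists u, c' = c + u by exists (c' - c); lia.
have [v' ev'] : exists v, d' = d + v by exists (d' - d); lia.
subst a' b' c' d'; clear le_a le_b le_c le_d.
wlog ab : a b u v c d u' v' em et es sm sq / a <= b.
  move=> W; case: (leqP a b) => h; first exact: W.
  have := W b a v u c d u' v'
    ltac:(lia) ltac:(lia) ltac:(lia) ltac:(lia) ltac:(nia) ltac:(lia); lia.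
wlog cd : c d u' v' em et es sm sq / c <= d.
  move=> W; case: (leqP c d) => h; first exact: W.
  have := W d c v' u'
    ltac:(lia) ltac:(lia) ltac:(lia) ltac:(lia) ltac:(nia) ltac:(lia); lia.
have ca : c = a by lia.
have db : d = b by lia.
subst c d; case: (eqVneq u u') => [uu'|neq_uu']; first by left; lia.
(* The gaps are swapped; the sum of squares then forces (u - v) (b - a) = 0. *)
have v'u : v' = u by lia.
have u'v : u' = v by lia.
subst v' u'.
case: (eqVneq a b) => [ab_eq|ab_neq]; first by right; lia.
have lt_ab : a < b by rewrite ltn_neqAle ab_neq.
case: (ltngtP u v) => [lt_uv|lt_vu|->]; [nia|nia|by left].
Qed.

Lemma perm_trinomial_sums {a a' b b' c c' d d' : nat} :
  a <= a' -> b <= b' -> c <= c' -> d <= d' ->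
  perm_eq (trinomial_sums a a' b b') (trinomial_sums c c' d d') ->
  (a = c /\ a' = c' /\ b = d /\ b' = d') \/ (a = d /\ a' = d' /\ b = c /\ b' = c').
Proof.
move=> le_a le_b le_c le_d pe.
have [em et es] := trinomial_sums_order_stats le_a le_b le_c le_d pe.
have := perm_sumn pe; have := perm_sumn (perm_map (fun x => x * x) pe).
rewrite /trinomial_sums /= => sq sm.
apply: eq_trinomial_params => //; nia.
Qed.

Local Open Scope ring_scope.

Lemma coef_sum_monomials (L : seq nat) k :
  (\sum_(e <- L) 'X^e : N1)`_k = count_mem k L.
Proof.
elim: L => [|e L IH]; first by rewrite big_nil coef0.
by rewrite big_cons coefD IH coefXn natn eq_sym.
Qed.

Lemma horner1_sum_monomials (L : seq nat) :
  (\sum_(e <- L) 'X^e : N1).[1%N] = size L.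
Proof.
elim: L => [|e L IH]; first by rewrite big_nil horner0.
by rewrite big_cons hornerD hornerXn expr1n IH natrE add1n.
Qed.

Lemma sum_monomials_inj (L1 L2 : seq nat) :
  (\sum_(e <- L1) 'X^e : N1) = \sum_(e <- L2) 'X^e -> perm_eq L1 L2.
Proof. by move=> E; apply/allP => k _; rewrite /= -!coef_sum_monomials E. Qed.

Lemma sum_monomialsM (L1 L2 : seq nat) :
  (\sum_(e <- L1) 'X^e : N1) * \sum_(e <- L2) 'X^e =
  \sum_(e <- [seq x + y | x <- L1, y <- L2]) 'X^e.
Proof.
rewrite big_allpairs_dep big_distrl; apply: eq_bigr => x _.
by rewrite big_distrr; apply: eq_bigr => y _; rewrite exprD.
Qed.

(* [%R] is needed because in [nat_scope] [n`_pi] is the pi-part of n. *)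
Definition exponents (p : N1) : seq nat :=
  flatten [seq nseq (p`_i)%R i | i <- iota 0 (size p)].

Lemma count_exponents (p : N1) k : count_mem k (exponents p) = p`_k.
Proof.
rewrite count_flatten -map_comp sumnE big_map.
rewrite (eq_bigr (fun i => if i == k then (p`_i)%R else 0)%N); last first.
  by move=> i _; rewrite /= count_nseq /=; case: eqP; rewrite ?mul1n.
rewrite -(big_mkcond (pred1 k)) -[size p]subn0 big_nat1_eq.
by case: ltnP => // le_p_k; rewrite nth_default.
Qed.

Lemma exponentsK (p : N1) : \sum_(e <- exponents p) 'X^e = p.
Proof. by apply/polyP => k; rewrite coef_sum_monomials count_exponents. Qed.

Lemma size_exponents (p : N1) : size (exponents p) = p.[1%N].
Proof. by rewrite -horner1_sum_monomials exponentsK. Qed.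

Lemma trinomial_exponents {p : N1} : p.[1%N] = 3%N -> p`_0 != 0 ->
  exists a a', (a <= a')%N /\ p = \sum_(e <- [:: 0%N; a; a']) 'X^e.
Proof.
move=> p3 p0.
have := exponentsK p; rewrite -(perm_big _ (permEl (perm_sort leq _))).
have : 0%N \in sort leq (exponents p).
  by rewrite mem_sort -has_pred1 has_count count_exponents lt0n.
have := sort_sorted leq_total (exponents p).
have := size_sort leq (exponents p); rewrite size_exponents p3.
case: (sort leq _) => [|x [|y [|z []]]] //= _ /and3P[xy yz _].
rewrite !inE => x0 pE; exists y, z; split => //.
rewrite -pE; suff -> : x = 0%N by [].
by case/or3P: x0 => /eqP x0; lia.
Qed.

Lemma trinomial_mul_unique {A B C D : N1} :
  A.[1%N] = 3%N -> B.[1%N] = 3%N -> C.[1%N] = 3%N -> D.[1%N] = 3%N ->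
  A`_0 != 0 -> B`_0 != 0 -> C`_0 != 0 -> D`_0 != 0 -> A * B = C * D ->
  (A = C /\ B = D) \/ (A = D /\ B = C).
Proof.
move=> A3 B3 C3 D3 A0 B0 C0 D0.
have [a [a' [le_a ->]]] := trinomial_exponents A3 A0.
have [b [b' [le_b ->]]] := trinomial_exponents B3 B0.
have [c [c' [le_c ->]]] := trinomial_exponents C3 C0.
have [d [d' [le_d ->]]] := trinomial_exponents D3 D0.
rewrite !sum_monomialsM => /sum_monomials_inj.
move=> /(perm_trinomial_sums le_a le_b le_c le_d).
by case=> [[-> [-> [-> ->]]]|[-> [-> [-> ->]]]]; [left|right].
Qed.

Lemma X_neq1 : 'X != 1 :> N1.
Proof. by apply/eqP => X1; have := size_polyX nat; rewrite X1 size_poly1. Qed.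

Lemma irreducibleN1_coef0 (q : N1) : irreducibleN1 q -> q`_0 = 0 -> q = 'X.
Proof.
move=> [_ [_ irr_q]] q0.
have q_eq : q = drop_poly 1 q * 'X.
  rewrite -[LHS](poly_take_drop 1) (_ : take_poly 1 q = 0) ?add0r //.
  by apply/polyP => -[|i]; rewrite coef_take_poly coef0.
have [d1|X1] := irr_q _ _ q_eq; first by rewrite q_eq d1 mul1r.
by move/eqP: X1; rewrite (negbTE X_neq1).
Qed.

Lemma irreducibleN1_gt1 (q : N1) : irreducibleN1 q -> q != 'X -> (1 < q.[1%N])%N.
Proof.
move=> irr_q qX; have [q_neq0 [q_neq1 _]] := irr_q.
rewrite -size_exponents; have := exponentsK q.
case: (exponents q) => [|e []] //=; first by rewrite big_nil => q0; case: q_neq0.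
rewrite big_seq1; case: e => [|e] qe; first by case: q_neq1; rewrite -qe expr0.
by case/eqP: qX; apply: irreducibleN1_coef0; rewrite // -qe coefXn.
Qed.

Lemma irreducibleN1_coef0_neq0 (q : N1) : irreducibleN1 q -> q != 'X -> q`_0 != 0.
Proof. by move=> irr_q; apply: contra_neq; exact: irreducibleN1_coef0. Qed.

Lemma not_irreducibleN1_mul {A B : N1} :
  A.[1%N] != 1%N -> B.[1%N] != 1%N -> ~ irreducibleN1 (A * B).
Proof.
move=> A1 B1 [_ [_ /(_ A B erefl)]].
by case=> AB1; [move: A1 | move: B1]; rewrite AB1 hornerC eqxx.
Qed.

Lemma mulXn_coef0_inj {R R' : N1} {k k' : nat} : R`_0 != 0 -> R'`_0 != 0 ->
  R * 'X^k = R' * 'X^k' -> k = k' /\ R = R'.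
Proof.
wlog le_k : R R' k k' / (k <= k')%N.
  move=> W R0 R'0 E; case: (leqP k k') => [|/ltnW] le; first exact: W.
  by have [-> ->] := W R' R k' k le R'0 R0 (esym E).
move=> R0 _ E.
have R_eq : R = R' * 'X^(k' - k).
  by rewrite -(drop_polyMXn_id k R) E -{1}(subnK le_k) exprD mulrA drop_polyMXn_id.
have k_eq : (k' - k = 0)%N.
  by apply/eqP; apply: contraNT R0; rewrite -lt0n R_eq coefMXn => ->.
by rewrite R_eq k_eq expr0 mulr1; split => //; lia.
Qed.

Lemma prod_split_X (s : seq N1) :
  \prod_(q <- s) q = \prod_(q <- s | q != 'X) q * 'X^(count_mem 'X s).
Proof.
rewrite (bigID (pred1 'X)) mulrC /=; congr (_ * _).
rewrite (eq_bigr (fun _ => 'X)) => [|q /eqP //].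
by rewrite big_const_seq iter_mulr_1.
Qed.

Lemma coef0_prod_nonX (s : seq N1) : (forall q, q \in s -> irreducibleN1 q) ->
  (\prod_(q <- s | q != 'X) q)`_0 != 0.
Proof.
move=> irr_s; rewrite coef0_prod -lt0n big_seq_cond.
apply: prodn_cond_gt0 => q /andP[q_s qX].
by rewrite lt0n; apply: irreducibleN1_coef0_neq0 (irr_s q q_s) qX.
Qed.

Lemma filter_pred1 (T : eqType) (x : T) (s : seq T) :
  filter (pred1 x) s = nseq (count_mem x s) x.
Proof. by elim: s => //= y s ->; case: eqP => [->|]. Qed.

Lemma perm_eq_count_filter_pred1 (T : eqType) (x : T) (s t : seq T) :
  count_mem x s = count_mem x t ->
  perm_eq [seq y <- s | y != x] [seq y <- t | y != x] -> perm_eq s t.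
Proof.
move=> cnt pe; rewrite -(perm_filterC (pred1 x) s).
apply: perm_trans (permEl (perm_filterC (pred1 x) t)).
by rewrite !filter_pred1 cnt perm_cat2l.
Qed.

Lemma irr_factorisation_filter (P : N1) (s : seq N1) (a : pred N1) :
  irr_factorisation P s -> irr_factorisation (\prod_(q <- s | a q) q) (filter a s).
Proof.
by case=> irr_s _; split => [q|]; rewrite ?big_filter // mem_filter => /andP[_ /irr_s].
Qed.

Lemma nonX_factorisation9_shape {R : N1} {s : seq N1} :
  R.[1%N] = 9%N -> irr_factorisation R s -> 'X \notin s ->
  size s = 1%N \/ exists A B, s = [:: A; B] /\ A.[1%N] = 3%N /\ B.[1%N] = 3%N.
Proof.
move=> R9 [irr_s prod_s] sX.
have s_ge2 : all (leq 2) [seq q.[1%N] | q <- s].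
  apply/allP => _ /mapP[q q_s ->]; apply: irreducibleN1_gt1 (irr_s q q_s) _.
  by apply: contraNneq sX => <-.
have prod9 : \prod_(n <- [seq q.[1%N] | q <- s]) n = 9%N.
  by rewrite big_map -horner_prod prod_s.
case: (prod_ge2_eq9 _ s_ge2 prod9); first by rewrite size_map; left.
case: s {irr_s prod_s sX s_ge2 prod9} => [|A [|B []]] //= [A3 B3].
by right; exists A, B.
Qed.

Lemma nonX_factorisation9_unique (R : N1) (s t : seq N1) :
  R.[1%N] = 9%N -> irr_factorisation R s -> irr_factorisation R t ->
  'X \notin s -> 'X \notin t -> perm_eq s t.
Proof.
move=> R9 fs ft sX tX.
have single u :
    irr_factorisation R u -> size u = 1%N -> u = [:: R] /\ irreducibleN1 R.
  case: u => [|Q []] // [irr_u]; rewrite big_seq1 => <- _.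
  by split => //; apply: irr_u; rewrite mem_head.
have pair u A B : irr_factorisation R u -> u = [:: A; B] -> R = A * B.
  by move=> [_ <-] ->; rewrite big_cons big_seq1.
have coef0_nonX u q :
    irr_factorisation R u -> 'X \notin u -> q \in u -> q`_0 != 0.
  move=> [irr_u _] uX qu; apply: irreducibleN1_coef0_neq0 (irr_u q qu) _.
  by apply: contraNneq uX => <-.
have neq1 A : A.[1%N] = 3%N -> A.[1%N] != 1%N by move->.
case: (nonX_factorisation9_shape R9 fs sX) => [s1|[A [B [sAB [A3 B3]]]]];
case: (nonX_factorisation9_shape R9 ft tX) => [t1|[C [D [tCD [C3 D3]]]]].
- by have [-> _] := single _ fs s1; have [-> _] := single _ ft t1.
- have [_] := single _ fs s1; rewrite (pair _ _ _ ft tCD).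
  by move/(not_irreducibleN1_mul (neq1 _ C3) (neq1 _ D3)).
- have [_] := single _ ft t1; rewrite (pair _ _ _ fs sAB).
  by move/(not_irreducibleN1_mul (neq1 _ A3) (neq1 _ B3)).
have A0 : A`_0 != 0 by apply: coef0_nonX fs sX _; rewrite sAB mem_head.
have B0 : B`_0 != 0 by apply: coef0_nonX fs sX _; rewrite sAB !inE eqxx orbT.
have C0 : C`_0 != 0 by apply: coef0_nonX ft tX _; rewrite tCD mem_head.
have D0 : D`_0 != 0 by apply: coef0_nonX ft tX _; rewrite tCD !inE eqxx orbT.
have := pair _ _ _ fs sAB; rewrite (pair _ _ _ ft tCD) => /esym ABCD.
rewrite sAB tCD.
case: (trinomial_mul_unique A3 B3 C3 D3 A0 B0 C0 D0 ABCD) => -[-> ->] //.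
exact: (permEl (perm_catC [:: D] [:: C])).
Qed.

Theorem mainTheorem11 (P : {poly nat}) (hP : P.[1%N] = 9%N) :
  forall s t : seq {poly nat},
    irr_factorisation P s -> irr_factorisation P t -> perm_eq s t.
Proof.
move=> s t fs ft.
pose R (u : seq N1) : N1 := \prod_(q <- u | q != 'X) q.
have P_eq u : irr_factorisation P u -> P = R u * 'X^(count_mem 'X u).
  by case=> _ <-; exact: prod_split_X.
have R0 u : irr_factorisation P u -> (R u)`_0 != 0.
  by case=> irr_u _; exact: coef0_prod_nonX.
have [cnt_eq R_eq] := mulXn_coef0_inj (R0 s fs) (R0 t ft)
  (etrans (esym (P_eq s fs)) (P_eq t ft)).
apply: perm_eq_count_filter_pred1 cnt_eq _.
apply: (@nonX_factorisation9_unique (R s)).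
- by move: hP; rewrite (P_eq s fs) hornerM hornerXn expr1n mulr1.
- exact: irr_factorisation_filter fs.
- by rewrite R_eq; exact: irr_factorisation_filter ft.
- by rewrite mem_filter eqxx.
- by rewrite mem_filter eqxx.
Qed.
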